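(* Let $R$ be a unital ring and $E$ a directed graph. If $(L_R(E))_0$ is left (respectively right) noetherian, then $E$ is finite and satisfies Condition (NE).
   Context: A directed graph $E=(E^0,E^1,s,r)$ has vertex set $E^0$, edge set $E^1$, source and range maps $s,r$; finite means $E^0,E^1$ finite. A path is a sequence of edges $f_1\cdots f_n$ with $s(f_{i+1})=r(f_i)$, of length $n$; a cycle is a path with $s(f_1)=r(f_n)$ and $s(f_i)\neq s(f_1)$ for $2\le i\le n$; it has an exit if some edge $f$ satisfies $s(f)=s(f_i)$ for some $i$ with $f\neq f_i$. Condition (NE): no cycle has an exit. $L_R(E)$ is the $R$-algebra generated by $v\in E^0$, $f,f^*$ ($f\in E^1$), with $R$ commuting with generators, subject to $v_iv_j=\delta_{i,j}v_i$; $s(f)f=fr(f)=f$, $r(f)f^*=f^*s(f)=f^*$; $f^*f'=\delta_{f,f'}r(f)$; and $\sum_{s(f)=v}ff^*=v$ whenever $s^{-1}(v)$ is nonempty and finite. With $\alpha^*=f_n^*\cdots f_1^*$, every element is a finite sum $\sum r_i\alpha_i\beta_i^*$ ($r_i\in R$, $\alpha_i,\beta_i$ paths, vertices as length-0 paths); $(L_R(E))_0$ is the subring of such sums with $\mathrm{len}(\alpha_i)=\mathrm{len}(\beta_i)$ for all $i$. *)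

From HB Require Import structures.
From mathcomp Require Import all_boot all_order all_algebra.
From Stdlib Require List.

Set Implicit Arguments.
Unset Strict Implicit.
Unset Printing Implicit Defensive.

Import GRing.Theory.
Local Open Scope ring_scope.

Section LPA.
Variables (E0 E1 : Type) (s r : E1 -> E0).

Definition fin_type (T : Type) : Prop := exists l : list T, forall x, List.In x l.

Definition finite_graph : Prop := fin_type E0 /\ fin_type E1.

(* A cycle of length n.+1 is given by c 0, ..., c n (values beyond n unused):
   s(c (i+1)) = r(c i), s(c 0) = r(c n), and s(c i) <> s(c 0) for 1 <= i <= n. *)
Definition is_cycle (n : nat) (c : nat -> E1) : Prop :=
  (forall i, (i < n)%N -> s (c i.+1) = r (c i)) /\
  s (c 0%N) = r (c n) /\
  (forall i, (1 <= i <= n)%N -> s (c i) <> s (c 0%N)).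

Definition cycle_has_exit (n : nat) (c : nat -> E1) : Prop :=
  exists (f : E1) (i : nat), (i <= n)%N /\ s f = s (c i) /\ f <> c i.

Definition condNE : Prop :=
  forall n c, is_cycle n c -> ~ cycle_has_exit n c.

(* (v, l) is a path starting at vertex v with edge list l
   (l = [::] : the vertex v as a path of length 0). *)
Fixpoint is_path (v : E0) (l : seq E1) : Prop :=
  match l with
  | [::] => True
  | f :: l' => s f = v /\ is_path (r f) l'
  end.

Variables (R : nzRingType) (B : pzRingType).

(* The Leavitt path relations, in a unital ring B, for the images
   vv v, ee f, es f (= f^* ) of the generators, together with a unital ring
   morphism iota : R -> B whose image commutes with the generators. *)
Definition LPA_relations (iota : R -> B) (vv : E0 -> B) (ee es : E1 -> B) : Prop :=
  (forall v w, v <> w -> vv v * vv w = 0) /\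
  (forall v, vv v * vv v = vv v) /\
  (forall f, vv (s f) * ee f = ee f /\ ee f * vv (r f) = ee f) /\
  (forall f, vv (r f) * es f = es f /\ es f * vv (s f) = es f) /\
  (forall f g, f <> g -> es f * ee g = 0) /\
  (forall f, es f * ee f = vv (r f)) /\
  (forall v (l : seq E1), l <> [::] -> List.NoDup l ->
      (forall f, List.In f l <-> s f = v) ->
      \sum_(f <- l) ee f * es f = vv v) /\
  (forall a, (forall v, iota a * vv v = vv v * iota a) /\
                 (forall f, iota a * ee f = ee f * iota a) /\
                 (forall f, iota a * es f = es f * iota a)).

(* alpha = (v, l) is sent to v f1 ... fn, and alpha^* to fn^* ... f1^* v. *)
Definition path_el (vv : E0 -> B) (ee : E1 -> B) (v : E0) (l : seq E1) : B :=
  vv v * \prod_(f <- l) ee f.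
Definition path_star_el (vv : E0 -> B) (es : E1 -> B) (v : E0) (l : seq E1) : B :=
  (\prod_(f <- rev l) es f) * vv v.

(* The degree-0 part: finite sums of  r_i alpha_i beta_i^*  with
   len alpha_i = len beta_i. *)
Definition in_deg0 (iota : R -> B) (vv : E0 -> B) (ee es : E1 -> B) (x : B) : Prop :=
  exists (n : nat) (c : 'I_n -> R) (v w : 'I_n -> E0) (a b : 'I_n -> seq E1),
    (forall i, is_path (v i) (a i) /\ is_path (w i) (b i) /\ size (a i) = size (b i)) /\
    x = \sum_(i < n) iota (c i) * path_el vv ee (v i) (a i) * path_star_el vv es (w i) (b i).

End LPA.

(* L_R(E) is then the (non-unital) subring of B
   spanned by the r alpha beta^*, and (L_R(E))_0 is [in_deg0]. *)
Definition LPA_universal (E0 E1 : Type) (s r : E1 -> E0) (R : nzRingType) (B : pzRingType)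
  (iota : {rmorphism R -> B}) (vv : E0 -> B) (ee es : E1 -> B) : Prop :=
  LPA_relations s r iota vv ee es /\
  forall (B' : pzRingType) (iota' : {rmorphism R -> B'}) (vv' : E0 -> B') (ee' es' : E1 -> B'),
    LPA_relations s r iota' vv' ee' es' ->
    exists phi : {rmorphism B -> B'},
      [/\ (forall a, phi (iota a) = iota' a),
          (forall v, phi (vv v) = vv' v),
          (forall f, phi (ee f) = ee' f),
          (forall f, phi (es f) = es' f) &
          (forall psi : {rmorphism B -> B'},
             (forall a, psi (iota a) = iota' a) ->
             (forall v, psi (vv v) = vv' v) ->
             (forall f, psi (ee f) = ee' f) ->
             (forall f, psi (es f) = es' f) ->
             forall x, psi x = phi x)].

Definition left_ideal_of (B : pzRingType) (S I : B -> Prop) : Prop :=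
  [/\ (forall x, I x -> S x), I 0, (forall x y, I x -> I y -> I (x - y)) &
      (forall a x, S a -> I x -> I (a * x))].
Definition right_ideal_of (B : pzRingType) (S I : B -> Prop) : Prop :=
  [/\ (forall x, I x -> S x), I 0, (forall x y, I x -> I y -> I (x - y)) &
      (forall a x, S a -> I x -> I (x * a))].

Definition left_noetherian (B : pzRingType) (S : B -> Prop) : Prop :=
  forall I : nat -> B -> Prop,
    (forall n, left_ideal_of S (I n)) ->
    (forall n x, I n x -> I n.+1 x) ->
    exists N, forall m, (N <= m)%N -> forall x, I m x <-> I N x.
Definition right_noetherian (B : pzRingType) (S : B -> Prop) : Prop :=
  forall I : nat -> B -> Prop,
    (forall n, right_ideal_of S (I n)) ->
    (forall n x, I n x -> I n.+1 x) ->
    exists N, forall m, (N <= m)%N -> forall x, I m x <-> I N x.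

(* If a family of paths (v_k, a_k) is separated, i.e. for j <> k the paths
   start at different vertices or neither of a_j, a_k is a prefix of the other,
   then the elements v_k a_k a_k^* v_k of (L_R(E))_0 are pairwise orthogonal
   idempotents; once they are known to be nonzero, the partial sums of the first
   n of them cut out strictly increasing chains of left and of right ideals.
   Nonvanishing is read off a representation of L_R(E) on R-valued functions on
   boundary walks, in which a a^* fixes the walks that start with a.
   Infinitely many vertices, infinitely many edges, or a cycle c with an exit f
   (through the paths c^k f) each give such a family. *)

From Pilot Require Import Defs.
From HB Require Import structures.
From mathcomp Require Import all_boot all_order all_algebra.
From mathcomp Require Import boolp functions.
From Stdlib Require List.

Set Implicit Arguments.
Unset Strict Implicit.
Unset Printing Implicit Defensive.

Import GRing.Theory.
Local Open Scope ring_scope.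

(** * Orthogonal idempotents and chain conditions *)

Section OrthogonalIdempotents.
Variables (B : pzRingType) (S : B -> Prop) (p : nat -> B).
Hypotheses (S0 : S 0) (SB : forall x y, S x -> S y -> S (x - y))
  (SM : forall x y, S x -> S y -> S (x * y)) (Sp : forall k, S (p k)).
Hypotheses (p_idem : forall k, p k * p k = p k)
  (p_orth : forall j k, j <> k -> p j * p k = 0) (p_neq0 : forall k, p k <> 0).

Lemma orthogonal_idempotents_not_left_noetherian : ~ left_noetherian S.
Proof.
pose P n := \sum_(k < n) p k.
have pP k n : p k * P n = if (k < n)%N then p k else 0.
  rewrite mulr_sumr; case: ifP => [lt_kn | /negbT].
    rewrite (bigD1 (Ordinal lt_kn)) //= p_idem big1 ?addr0 // => i ik.
    by apply: p_orth => ki; rewrite -val_eqE /= ki eqxx in ik.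
  by rewrite -leqNgt => le_nk; rewrite big1 // => i _; apply: p_orth => ki;
    move: (ltn_ord i); rewrite -ki ltnNge le_nk.
have PP n : P n * P n.+1 = P n.
  by rewrite mulr_suml; apply: eq_bigr => i _; rewrite pP ltnS ltnW.
(* p n lies in I n.+1 but not in I n, so the chain never stabilises. *)
pose I n x := S x /\ x = x * P n.
have I_ideal n : left_ideal_of S (I n).
  split=> [x [] // | | x y [Sx Ex] [Sy Ey] | a x Sa [Sx Ex]].
  - by rewrite /I mul0r.
  - by split; [exact: SB | rewrite mulrBl -Ex -Ey].
  - by split; [exact: SM | rewrite -mulrA -Ex].
have I_incr n x : I n x -> I n.+1 x by case=> Sx Ex; split; rewrite // {2}Ex -mulrA PP.
move=> /(_ I I_ideal I_incr) [N stable].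
have [_ pN0] : I N (p N) by apply/(stable N.+1 (leqnSn N)); rewrite /I pP ltnSn.
by move: pN0; rewrite pP ltnn; exact: p_neq0.
Qed.

End OrthogonalIdempotents.

Lemma orthogonal_idempotents_not_noetherian (B : pzRingType) (S : B -> Prop) (p : nat -> B) :
  S 0 -> (forall x y, S x -> S y -> S (x - y)) -> (forall x y, S x -> S y -> S (x * y)) ->
  (forall k, S (p k)) -> (forall k, p k * p k = p k) ->
  (forall j k, j <> k -> p j * p k = 0) -> (forall k, p k <> 0) ->
  ~ left_noetherian S /\ ~ right_noetherian S.
Proof.
move=> S0 SB SM Sp p_idem p_orth p_neq0; split.
  exact: (orthogonal_idempotents_not_left_noetherian S0 SB SM Sp p_idem p_orth p_neq0).
(* Right ideals of B are the left ideals of the converse ring B^c. *)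
have SMc x y : S x -> S y -> S (y * x) by move=> Sx Sy; apply: SM.
have p_orthc j k : j <> k -> p k * p j = 0 by move=> jk; apply: p_orth => /esym.
exact: (@orthogonal_idempotents_not_left_noetherian B^c S p S0 SB SMc Sp p_idem p_orthc p_neq0).
Qed.

(** * Paths and the Leavitt relations *)

Section Paths.
Variables (E0 E1 : Type) (s r : E1 -> E0).

Definition endp (v : E0) (a : seq E1) : E0 := last v (map r a).

Lemma endp_cons v f a : endp v (f :: a) = endp (r f) a.
Proof. by []. Qed.

Lemma is_path_cat v a t :
  is_path s r v (a ++ t) <-> is_path s r v a /\ is_path s r (endp v a) t.
Proof. by elim: a v => [|f a IH] v /=; [tauto | rewrite IH; tauto]. Qed.

Definition diverge (a b : seq E1) : Prop :=
  exists p f g a1 b1, [/\ f <> g, a = p ++ f :: a1 & b = p ++ g :: b1].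

Lemma prefix_or_diverge (a b : seq E1) :
  [\/ exists t, b = a ++ t, exists t, a = b ++ t | diverge a b].
Proof.
elim: a b => [|f a IH] [|g b]; try by [constructor 1; eexists | constructor 2; eexists].
have [<- | fg] := pselect (f = g); last by constructor 3; exists [::], f, g, a, b.
case: (IH b) => [[t ->] | [t ->] | [p [f' [g' [a1 [b1 [fg' -> ->]]]]]]].
- by constructor 1; exists t.
- by constructor 2; exists t.
- by constructor 3; exists (f :: p), f', g', a1, b1.
Qed.

Definition separated_paths (vf : nat -> E0) (af : nat -> seq E1) : Prop :=
  (forall k, is_path s r (vf k) (af k)) /\
  (forall j k, j <> k -> vf j <> vf k \/ diverge (af j) (af k)).

End Paths.

Section LeavittRelations.
Variables (E0 E1 : Type) (s r : E1 -> E0) (R : nzRingType) (B : pzRingType).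
Variables (iota : R -> B) (vv : E0 -> B) (ee es : E1 -> B).
Hypothesis rel : LPA_relations s r iota vv ee es.

Local Notation path_el := (path_el vv ee).
Local Notation path_star_el := (path_star_el vv es).
Local Notation is_path := (is_path s r).
Local Notation endp := (endp r).

Lemma vv_orth v w : v <> w -> vv v * vv w = 0.
Proof. by case: rel => orth _; exact: orth. Qed.
Lemma vv_idem v : vv v * vv v = vv v.
Proof. by case: rel => _ [idem _]; exact: idem. Qed.
Lemma vv_ee f : vv (s f) * ee f = ee f.
Proof. by case: rel => _ [_ [ve _]]; case: (ve f). Qed.
Lemma ee_vv f : ee f * vv (r f) = ee f.
Proof. by case: rel => _ [_ [ve _]]; case: (ve f). Qed.
Lemma vv_es f : vv (r f) * es f = es f.
Proof. by case: rel => _ [_ [_ [vs _]]]; case: (vs f). Qed.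
Lemma es_vv f : es f * vv (s f) = es f.
Proof. by case: rel => _ [_ [_ [vs _]]]; case: (vs f). Qed.
Lemma es_ee_neq f g : f <> g -> es f * ee g = 0.
Proof. by case: rel => _ [_ [_ [_ [orth _]]]]; exact: orth. Qed.
Lemma es_ee f : es f * ee f = vv (r f).
Proof. by case: rel => _ [_ [_ [_ [_ [ck1 _]]]]]; exact: ck1. Qed.
Lemma iota_comm a :
  [/\ forall v, GRing.comm (iota a) (vv v), forall f, GRing.comm (iota a) (ee f)
    & forall f, GRing.comm (iota a) (es f)].
Proof. by case: rel => _ [_ [_ [_ [_ [_ [_ /(_ a) [cv [ce cs]]]]]]]]. Qed.

Lemma iota_comm_path_el a v t : GRing.comm (iota a) (path_el v t).
Proof.
have [cv ce _] := iota_comm a.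
by apply: commrM; [exact: cv | apply: commr_prod => f _; exact: ce].
Qed.

Lemma iota_comm_path_star_el a v t : GRing.comm (iota a) (path_star_el v t).
Proof.
have [cv _ cs] := iota_comm a.
by apply: commrM; [apply: commr_prod => f _; exact: cs | exact: cv].
Qed.

Lemma vv_path_el v a : vv v * path_el v a = path_el v a.
Proof. by rewrite /path_el mulrA vv_idem. Qed.

Lemma path_star_el_vv v a : path_star_el v a * vv v = path_star_el v a.
Proof. by rewrite /path_star_el -mulrA vv_idem. Qed.

Lemma path_el_cons v f a : s f = v -> path_el v (f :: a) = ee f * path_el (r f) a.
Proof. by move=> <-; rewrite /path_el big_cons mulrA vv_ee -{1}ee_vv mulrA. Qed.

Lemma path_star_el_cons v f a :
  s f = v -> path_star_el v (f :: a) = path_star_el (r f) a * es f.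
Proof.
by move=> <-; rewrite /path_star_el rev_cons big_rcons /= -mulrA es_vv -{1}vv_es mulrA.
Qed.

Lemma path_el_endp v a : is_path v a -> path_el v a * vv (endp v a) = path_el v a.
Proof.
elim: a v => [|f a IH] v /=; first by rewrite /path_el big_nil mulr1 vv_idem.
by case=> sf pa; rewrite path_el_cons // endp_cons -mulrA IH.
Qed.

Lemma endp_path_star_el v a :
  is_path v a -> vv (endp v a) * path_star_el v a = path_star_el v a.
Proof.
elim: a v => [|f a IH] v /=; first by rewrite /path_star_el big_nil mul1r vv_idem.
by case=> sf pa; rewrite path_star_el_cons // endp_cons mulrA IH.
Qed.

Lemma path_el_cat v a t :
  is_path v a -> path_el v a * path_el (endp v a) t = path_el v (a ++ t).
Proof.
elim: a v => [|f a IH] v /=; first by rewrite /path_el big_nil mulr1 mulrA vv_idem.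
by case=> sf pa; rewrite !path_el_cons // endp_cons -mulrA IH.
Qed.

Lemma path_el_mul_eq0 v a z t :
  is_path v a -> z <> endp v a -> path_el v a * path_el z t = 0.
Proof.
move=> pa zv; rewrite -(path_el_endp pa) -(vv_path_el z) mulrA -(mulrA (path_el v a)).
by rewrite vv_orth ?mulr0 ?mul0r // => /esym.
Qed.

Lemma path_star_el_cat v a t :
  is_path v a -> path_star_el (endp v a) t * path_star_el v a = path_star_el v (a ++ t).
Proof.
elim: a v => [|f a IH] v /=; first by rewrite /path_star_el big_nil mul1r -mulrA vv_idem.
by case=> sf pa; rewrite !path_star_el_cons // endp_cons mulrA IH.
Qed.

Lemma path_star_el_mul_eq0 v a z t :
  is_path v a -> z <> endp v a -> path_star_el z t * path_star_el v a = 0.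
Proof.
move=> pa zv; rewrite -(endp_path_star_el pa) -(path_star_el_vv z) mulrA.
by rewrite -(mulrA (path_star_el z t)) vv_orth ?mulr0 ?mul0r.
Qed.

Lemma star_path_vertex_neq w b v a : w <> v -> path_star_el w b * path_el v a = 0.
Proof.
move=> wv; rewrite -(path_star_el_vv w) -(vv_path_el v) mulrA.
by rewrite -(mulrA (path_star_el w b)) vv_orth // mulr0 mul0r.
Qed.

Lemma star_path_prefix w b t :
  is_path w b -> path_star_el w b * path_el w (b ++ t) = path_el (endp w b) t.
Proof.
elim: b w => [|f b IH] w /=; first by rewrite /path_star_el big_nil mul1r vv_path_el.
case=> sf pb; rewrite path_star_el_cons // path_el_cons // mulrA -(mulrA _ (es f)).
by rewrite es_ee path_star_el_vv endp_cons IH.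
Qed.

Lemma star_path_suffix w a t :
  is_path w a -> path_star_el w (a ++ t) * path_el w a = path_star_el (endp w a) t.
Proof.
elim: a w => [|f a IH] w /=.
  by rewrite /path_el big_nil mulr1 path_star_el_vv.
case=> sf pa; rewrite path_star_el_cons // path_el_cons // mulrA -(mulrA _ (es f)).
by rewrite es_ee -mulrA vv_path_el endp_cons IH.
Qed.

Lemma star_path_diverge w b a : is_path w b -> diverge b a -> path_star_el w b * path_el w a = 0.
Proof.
move=> pb [p [f [g [b1 [a1 [fg eb ea]]]]]]; subst a b.
elim: p w pb => [|h p IH] w /= [sh pb].
  rewrite path_star_el_cons // /path_el big_cons -sh !mulrA -(mulrA _ (es f)) es_vv.
  by rewrite -(mulrA _ (es f)) es_ee_neq // mulr0 mul0r.
by rewrite path_star_el_cons // path_el_cons // mulrA -(mulrA _ (es h)) es_ee path_star_el_vv IH.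
Qed.

Definition path_proj v a := path_el v a * path_star_el v a.

Lemma star_path_self v a : is_path v a -> path_star_el v a * path_el v a = vv (endp v a).
Proof.
by move=> pa; rewrite -{2}[a]cats0 star_path_prefix // /Defs.path_el big_nil mulr1.
Qed.

Lemma path_proj_idem v a : is_path v a -> path_proj v a * path_proj v a = path_proj v a.
Proof.
move=> pa; rewrite /path_proj mulrA -(mulrA (path_el v a)) star_path_self //.
by rewrite path_el_endp.
Qed.

Lemma path_proj_orth v a v' a' :
  is_path v a -> v <> v' \/ diverge a a' -> path_proj v a * path_proj v' a' = 0.
Proof.
move=> pa sep; rewrite /path_proj mulrA -(mulrA (path_el v a)).
have [ev | vv'] := pselect (v = v'); last by rewrite star_path_vertex_neq // mulr0 mul0r.
subst v'; case: sep => [/(_ erefl) [] | dv].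
by rewrite star_path_diverge // mulr0 mul0r.
Qed.

End LeavittRelations.

(** * The degree-zero part is a subring *)

Section DegreeZero.
Variables (E0 E1 : Type) (s r : E1 -> E0) (R : nzRingType) (B : pzRingType).
Variables (iota : {rmorphism R -> B}) (vv : E0 -> B) (ee es : E1 -> B).
Hypothesis rel : LPA_relations s r iota vv ee es.

Local Notation path_el := (path_el vv ee).
Local Notation path_star_el := (path_star_el vv es).
Local Notation is_path := (is_path s r).
Local Notation endp := (endp r).
Local Notation S := (in_deg0 s r iota vv ee es).

Definition balanced_paths v a w b := is_path v a /\ is_path w b /\ size a = size b.

Lemma in_deg0_0 : S 0.
Proof.
have no_vertex (i : 'I_0) : E0 by case: i.
exists 0%N, (fun=> 0), no_vertex, no_vertex, (fun=> [::]), (fun=> [::]).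
by split=> [[] //|]; rewrite big_ord0.
Qed.

Lemma in_deg0_monomial c v a w b :
  balanced_paths v a w b -> S (iota c * path_el v a * path_star_el w b).
Proof.
by exists 1%N, (fun=> c), (fun=> v), (fun=> w), (fun=> a), (fun=> b); rewrite big_ord1.
Qed.

Lemma in_deg0D x y : S x -> S y -> S (x + y).
Proof.
move=> [n [c [v [w [a [b [ok ->]]]]]]] [m [c' [v' [w' [a' [b' [ok' ->]]]]]]].
pose join T (F : 'I_n -> T) (F' : 'I_m -> T) (i : 'I_(n + m)) :=
  match fintype.split i with inl j => F j | inr j => F' j end.
exists (n + m)%N, (join _ c c'), (join _ v v'), (join _ w w'), (join _ a a'), (join _ b b').
split=> [i|]; first by rewrite /join; case: (fintype.split i).
rewrite big_split_ord; congr (_ + _); apply: eq_bigr => i _;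
  by rewrite /join (unsplitK (inl _ _)) || rewrite /join (unsplitK (inr _ _)).
Qed.

Lemma in_deg0N x : S x -> S (- x).
Proof.
move=> [n [c [v [w [a [b [ok ->]]]]]]].
exists n, (fun i => - c i), v, w, a, b; split=> //.
by rewrite -sumrN; apply: eq_bigr => i _; rewrite rmorphN !mulNr.
Qed.

Lemma in_deg0B x y : S x -> S y -> S (x - y).
Proof. by move=> Sx Sy; apply: in_deg0D => //; apply: in_deg0N. Qed.

Lemma monomial_mulE c v a w b c' v' a' w' b' :
  iota c * path_el v a * path_star_el w b * (iota c' * path_el v' a' * path_star_el w' b')
  = iota (c * c') * (path_el v a * (path_star_el w b * path_el v' a') * path_star_el w' b').
Proof.
have comm_c' : GRing.comm (iota c') (path_el v a * path_star_el w b).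
  by apply: commrM; [exact: (iota_comm_path_el rel) | exact: (iota_comm_path_star_el rel)].
move: (path_el v a) (path_star_el w b) (path_el v' a') (path_star_el w' b') comm_c'.
by move=> P Q P' Q' comm; rewrite rmorphM -!mulrA; congr (_ * _); rewrite !mulrA -comm !mulrA.
Qed.

Lemma monomialM c v a w b c' v' a' w' b' :
  balanced_paths v a w b -> balanced_paths v' a' w' b' ->
  S (iota c * path_el v a * path_star_el w b * (iota c' * path_el v' a' * path_star_el w' b')).
Proof.
move=> [pa [pb ab]] [pa' [pb' ab']]; rewrite monomial_mulE.
have zero_case (x y : B) : x * 0 * y = 0 by rewrite mulr0 mul0r.
have [ew | wv'] := pselect (w = v'); last first.
  by rewrite (star_path_vertex_neq rel) // zero_case mulr0; exact: in_deg0_0.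
subst v'; case: (prefix_or_diverge b a') => [[t ea'] | [t eb] | dv]; last first.
- by rewrite (star_path_diverge rel) // zero_case mulr0; exact: in_deg0_0.
- subst b; rewrite (star_path_suffix rel) //.
  have [eq_end | ne_end] := pselect (endp w a' = endp w' b'); last first.
    by rewrite -(mulrA (path_el v a)) (path_star_el_mul_eq0 rel) // !mulr0; exact: in_deg0_0.
  have [_ pt] := proj1 (is_path_cat s r w a' t) pb.
  rewrite eq_end -(mulrA (path_el v a)) (path_star_el_cat rel) // mulrA.
  apply: in_deg0_monomial; split; [by [] | split; last by rewrite ab !size_cat ab'].
  by apply/is_path_cat; split; rewrite -?eq_end.
- subst a'; rewrite (star_path_prefix rel) //.
  have [eq_end | ne_end] := pselect (endp w b = endp v a); last first.
    by rewrite (path_el_mul_eq0 rel) // mul0r mulr0; exact: in_deg0_0.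
  have [_ pt] := proj1 (is_path_cat s r w b t) pa'.
  rewrite eq_end (path_el_cat rel) // mulrA; apply: in_deg0_monomial.
  split; [by apply/is_path_cat; split; rewrite -?eq_end | split=> //].
  by rewrite size_cat ab -size_cat.
Qed.

Lemma in_deg0M x y : S x -> S y -> S (x * y).
Proof.
move=> [n [c [v [w [a [b [ok ->]]]]]]] [m [c' [v' [w' [a' [b' [ok' ->]]]]]]].
rewrite mulr_suml; apply: big_ind => [|? ?|i _]; [exact: in_deg0_0 | exact: in_deg0D |].
rewrite mulr_sumr; apply: big_ind => [|? ?|j _]; [exact: in_deg0_0 | exact: in_deg0D |].
exact: monomialM.
Qed.

Lemma in_deg0_path_proj v a : is_path v a -> S (path_proj vv ee es v a).
Proof.
move=> pa; rewrite /path_proj -[path_el v a]mul1r -(rmorph1 iota).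
exact: in_deg0_monomial.
Qed.

End DegreeZero.

(** * A representation on functions of boundary walks *)

Section AdditiveEndomorphisms.
Variable V : zmodType.

Record addEnd := AddEnd {
  addEnd_fun :> V -> V;
  addEnd_is_zmod_morphism : zmod_morphism addEnd_fun }.

HB.instance Definition _ (f : addEnd) :=
  GRing.isZmodMorphism.Build V V f (addEnd_is_zmod_morphism f).

Lemma addEnd_ext (f g : addEnd) : f =1 g -> f = g.
Proof.
case: f g => [f fM] [g gM] /= /funext fg; move: gM; rewrite -fg => gM.
by congr AddEnd; apply: Prop_irrelevance.
Qed.

HB.instance Definition _ := gen_eqMixin addEnd.
HB.instance Definition _ := gen_choiceMixin addEnd.

Fact null_is_zmod_morphism : zmod_morphism (fun _ : V => 0 : V).
Proof. by move=> _ _; rewrite subr0. Qed.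
Fact opp_is_zmod_morphism (f : addEnd) : zmod_morphism (fun x => - f x).
Proof. by move=> x y; rewrite raddfB opprB opprK addrC. Qed.
Fact add_is_zmod_morphism (f g : addEnd) : zmod_morphism (fun x => f x + g x).
Proof. by move=> x y; rewrite !raddfB opprD addrACA. Qed.
Fact id_is_zmod_morphism : zmod_morphism (@id V).
Proof. by []. Qed.
Fact comp_is_zmod_morphism (f g : addEnd) : zmod_morphism (f \o g).
Proof. by move=> x y; rewrite /= !raddfB. Qed.

Definition addEnd0 := AddEnd null_is_zmod_morphism.
Definition addEnd_opp f := AddEnd (opp_is_zmod_morphism f).
Definition addEnd_add f g := AddEnd (add_is_zmod_morphism f g).
Definition addEnd1 := AddEnd id_is_zmod_morphism.
Definition addEnd_mul f g := AddEnd (comp_is_zmod_morphism f g).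

Fact addEnd_addA : associative addEnd_add.
Proof. by move=> f g h; apply: addEnd_ext => x /=; rewrite addrA. Qed.
Fact addEnd_addC : commutative addEnd_add.
Proof. by move=> f g; apply: addEnd_ext => x /=; rewrite addrC. Qed.
Fact addEnd_add0 : left_id addEnd0 addEnd_add.
Proof. by move=> f; apply: addEnd_ext => x /=; rewrite add0r. Qed.
Fact addEnd_addN : left_inverse addEnd0 addEnd_opp addEnd_add.
Proof. by move=> f; apply: addEnd_ext => x /=; rewrite addNr. Qed.

HB.instance Definition _ := GRing.isZmodule.Build addEnd
  addEnd_addA addEnd_addC addEnd_add0 addEnd_addN.

Fact addEnd_mulA : associative addEnd_mul.
Proof. by move=> f g h; apply: addEnd_ext. Qed.
Fact addEnd_mul1 : left_id addEnd1 addEnd_mul.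
Proof. by move=> f; apply: addEnd_ext. Qed.
Fact addEnd_mulr1 : right_id addEnd1 addEnd_mul.
Proof. by move=> f; apply: addEnd_ext. Qed.
Fact addEnd_mulDl : left_distributive addEnd_mul +%R.
Proof. by move=> f g h; apply: addEnd_ext. Qed.
Fact addEnd_mulDr : right_distributive addEnd_mul +%R.
Proof. by move=> f g h; apply: addEnd_ext => x /=; rewrite raddfD. Qed.

HB.instance Definition _ := GRing.Zmodule_isPzRing.Build addEnd
  addEnd_mulA addEnd_mul1 addEnd_mulr1 addEnd_mulDl addEnd_mulDr.

Lemma addEnd_mulE (f g : addEnd) x : (f * g) x = f (g x).
Proof. by []. Qed.

Lemma addEnd_sumE (I : Type) (l : seq I) (F : I -> addEnd) x :
  (\sum_(i <- l) F i) x = \sum_(i <- l) F i x.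
Proof. by elim/big_rec2: _ => // i y G _ <-. Qed.

End AdditiveEndomorphisms.

Section Pullback.
Variables (X : Type) (M : zmodType).

Definition pullback_fun (sg : X -> option X) (m : X -> M) : X -> M :=
  fun x => if sg x is Some y then m y else 0.

Fact pullback_is_zmod_morphism sg : zmod_morphism (pullback_fun sg).
Proof.
by move=> m1 m2; apply: funext => x; rewrite /pullback_fun !fctE; case: (sg x); rewrite ?subr0.
Qed.

Definition pullback sg : addEnd (X -> M) := AddEnd (pullback_is_zmod_morphism sg).

Lemma pullbackE sg m x : pullback sg m x = if sg x is Some y then m y else 0.
Proof. by []. Qed.

Lemma pullback_ext sg tau : sg =1 tau -> pullback sg = pullback tau.
Proof.
by move=> eq_sg; apply: addEnd_ext => m; apply: funext => x; rewrite !pullbackE eq_sg.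
Qed.

Lemma pullbackM sg tau : pullback sg * pullback tau = pullback (fun x => obind tau (sg x)).
Proof.
by apply: addEnd_ext => m; apply: funext => x; rewrite addEnd_mulE !pullbackE; case: (sg x).
Qed.

Lemma pullback_none : pullback (fun=> None) = 0.
Proof. exact: addEnd_ext. Qed.

End Pullback.

Section LeftMultiplication.
Variables (X : Type) (R : pzRingType).

Fact lmul_fun_is_zmod_morphism (a : R) : zmod_morphism (fun (m : X -> R) x => a * m x).
Proof. by move=> m1 m2; apply: funext => x; rewrite !fctE mulrBr. Qed.

Definition lmul (a : R) : addEnd (X -> R) := AddEnd (lmul_fun_is_zmod_morphism a).

Lemma lmulE a m x : lmul a m x = a * m x.
Proof. by []. Qed.

Fact lmul_is_zmod_morphism : zmod_morphism lmul.
Proof. by move=> a b; apply: addEnd_ext => m; apply: funext => x; rewrite /= mulrBl. Qed.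

Fact lmul_is_monoid_morphism : monoid_morphism lmul.
Proof.
split=> [|a b]; apply: addEnd_ext => m; apply: funext => x /=; first by rewrite mul1r.
by rewrite mulrA.
Qed.

HB.instance Definition _ := GRing.isZmodMorphism.Build R (addEnd (X -> R)) lmul
  lmul_is_zmod_morphism.
HB.instance Definition _ := GRing.isMonoidMorphism.Build R (addEnd (X -> R)) lmul
  lmul_is_monoid_morphism.

Lemma lmul_pullbackC a (sg : X -> option X) :
  lmul a * pullback R sg = pullback R sg * lmul a.
Proof.
apply: addEnd_ext => m; apply: funext => x.
by rewrite !addEnd_mulE pullbackE !lmulE pullbackE; case: (sg x); rewrite ?lmulE ?mulr0.
Qed.

End LeftMultiplication.

Section ListSums.
Variables (T : Type) (V : nmodType).

Lemma sum_In_eq0 (l : seq T) (F : T -> V) :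
  (forall f, List.In f l -> F f = 0) -> \sum_(f <- l) F f = 0.
Proof.
elim: l => [|a l IH] F0; first by rewrite big_nil.
by rewrite big_cons F0 /= ?add0r ?IH // => [f lf|]; [apply: F0; right | left].
Qed.

Lemma sum_NoDup_single (l : seq T) (F : T -> V) g : List.NoDup l -> List.In g l ->
  (forall f, List.In f l -> f <> g -> F f = 0) -> \sum_(f <- l) F f = F g.
Proof.
elim: l => [|a l IH] //= nd lg F0; rewrite big_cons; inversion nd as [|a' l' al ndl]; subst.
case: lg => [ag | lg].
  subst g; rewrite sum_In_eq0 ?addr0 // => f lf.
  by apply: F0 => [|fa]; [apply: or_intror | subst f; exact: al].
have -> : F a = 0 by apply: F0 => [|ag]; [left | subst a; exact: al].
by rewrite add0r IH // => f lf; apply: F0 => //; right.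
Qed.

End ListSums.

Section BoundaryWalks.
Variables (E0 E1 : Type) (s r : E1 -> E0) (R : nzRingType).

(* The form in which (CK2) appears in [LPA_relations]: s^-1(v) is finite and nonempty. *)
Definition regular (v : E0) : Prop :=
  exists l : seq E1, [/\ l <> [::], List.NoDup l & forall f, List.In f l <-> s f = v].

Definition walk := (E0 * (nat -> option E1))%type.

Fixpoint vertex_at (v : E0) (p : nat -> option E1) (n : nat) : E0 :=
  if n is n'.+1 then (if p n' is Some f then r f else vertex_at v p n') else v.

(* Step n follows the edge [p n], or pauses ([None]); pausing is only allowed
   at a vertex that is not regular, as (CK2) forbids it elsewhere. *)
Definition admissible (x : walk) : Prop :=
  forall n, if x.2 n is Some f then s f = vertex_at x.1 x.2 n
            else ~ regular (vertex_at x.1 x.2 n).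

Definition pcons (f : E1) (p : nat -> option E1) : nat -> option E1 :=
  fun n => if n is n'.+1 then p n' else Some f.

Definition shift (p : nat -> option E1) : nat -> option E1 := fun n => p n.+1.

Lemma pcons_shift p f : p 0%N = Some f -> pcons f (shift p) = p.
Proof. by move=> p0; apply: funext => -[]. Qed.

Lemma vertex_at_cons f p n : vertex_at (s f) (pcons f p) n.+1 = vertex_at (r f) p n.
Proof. by elim: n => [|n /= <-]. Qed.

Lemma admissible_cons f p : admissible (s f, pcons f p) <-> admissible (r f, p).
Proof.
split=> adm n; first by have := adm n.+1; rewrite vertex_at_cons.
by case: n => [|n] //; rewrite vertex_at_cons; exact: adm.
Qed.

Lemma admissible_shift x f :
  admissible x -> x.2 0%N = Some f -> x.1 = s f /\ admissible (r f, shift x.2).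
Proof.
case: x => v p /= adm p0; have sf : s f = v by have := adm 0%N; rewrite /= p0.
by split=> //; apply/admissible_cons; rewrite (pcons_shift p0) sf.
Qed.

Lemma admissible_exists z : exists q, admissible (z, q).
Proof.
have out_edge v : exists o : option E1, if o is Some f then s f = v else ~ regular v.
  have [[[|f l] [l0 _ Hl]] | nreg] := pselect (regular v); last by exists None.
  - by [].
  - by exists (Some f); apply/Hl; left.
have [next nextP] := choice out_edge.
pose step v := if next v is Some f then r f else v.
exists (fun n => next (iter n step z)).
have at_iter n : vertex_at z (fun n => next (iter n step z)) n = iter n step z.
  by elim: n => //= n ->.
by move=> n /=; rewrite at_iter; exact: nextP.
Qed.

Definition vertex_sel v (x : walk) : option walk :=
  if pselect (x.1 = v /\ admissible x) then Some x else None.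
Definition edge_sel f (x : walk) : option walk :=
  if pselect (x.1 = s f /\ x.2 0%N = Some f /\ admissible x)
  then Some (r f, shift x.2) else None.
Definition ghost_sel f (x : walk) : option walk :=
  if pselect (x.1 = r f /\ admissible x) then Some (s f, pcons f x.2) else None.

Definition vertex_op v := pullback R (vertex_sel v).
Definition edge_op f := pullback R (edge_sel f).
Definition ghost_op f := pullback R (ghost_sel f).

Lemma vertex_op_orth v w : v <> w -> vertex_op v * vertex_op w = 0.
Proof.
move=> vw; rewrite /vertex_op pullbackM -(@pullback_none walk R); apply: pullback_ext => x.
rewrite /vertex_sel; case: (pselect (x.1 = v /\ _)) => [[xv _]|//] /=.
by case: pselect => //= -[xw _]; case: vw; rewrite -xv -xw.
Qed.

Lemma vertex_op_idem v : vertex_op v * vertex_op v = vertex_op v.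
Proof.
rewrite /vertex_op pullbackM; apply: pullback_ext => x.
by rewrite /vertex_sel; case: (pselect (x.1 = v /\ _)) => //= xv; case: pselect.
Qed.

Lemma vertex_edge_op f : vertex_op (s f) * edge_op f = edge_op f.
Proof.
rewrite /vertex_op /edge_op pullbackM; apply: pullback_ext => x.
rewrite /vertex_sel /edge_sel; case: (pselect (x.1 = s f /\ admissible x)) => [//|nx] /=.
by case: pselect => //= -[x1 [_ adm]]; case: nx.
Qed.

Lemma edge_vertex_op f : edge_op f * vertex_op (r f) = edge_op f.
Proof.
rewrite /vertex_op /edge_op pullbackM; apply: pullback_ext => x.
rewrite /vertex_sel /edge_sel; case: (pselect (x.1 = s f /\ _)) => [[x1 [x0 adm]]|//] /=.
by case: pselect => //= -[]; split=> //; case: (admissible_shift adm x0).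
Qed.

Lemma vertex_ghost_op f : vertex_op (r f) * ghost_op f = ghost_op f.
Proof.
rewrite /vertex_op /ghost_op pullbackM; apply: pullback_ext => x.
rewrite /vertex_sel /ghost_sel; case: (pselect (x.1 = r f /\ _)) => [cond|//] /=.
by case: pselect => // /(_ cond).
Qed.

Lemma ghost_vertex_op f : ghost_op f * vertex_op (s f) = ghost_op f.
Proof.
rewrite /vertex_op /ghost_op pullbackM; apply: pullback_ext => -[v p].
rewrite /vertex_sel /ghost_sel; case: (pselect ((v, p).1 = r f /\ _)) => [[/= -> adm]|//] /=.
by case: pselect => //= -[]; split=> //; apply/admissible_cons.
Qed.

Lemma ghost_edge_op_neq f g : f <> g -> ghost_op f * edge_op g = 0.
Proof.
move=> fg; rewrite /ghost_op /edge_op pullbackM -(@pullback_none walk R).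
apply: pullback_ext => x; rewrite /ghost_sel /edge_sel.
case: (pselect (x.1 = r f /\ _)) => //= _.
by case: pselect => //= -[_ [[/fg]]].
Qed.

Lemma ghost_edge_op f : ghost_op f * edge_op f = vertex_op (r f).
Proof.
rewrite /ghost_op /edge_op /vertex_op pullbackM; apply: pullback_ext => -[v p].
rewrite /ghost_sel /edge_sel /vertex_sel.
case: (pselect ((v, p).1 = r f /\ _)) => [cond | //] /=; case: cond => /= vrf adm.
case: pselect => /= [_ | []]; first by rewrite vrf.
by split=> //; split=> //; apply/admissible_cons; rewrite -vrf.
Qed.

Lemma edge_ghost_op f : edge_op f * ghost_op f =
  pullback R (fun x => if pselect (x.1 = s f /\ x.2 0%N = Some f /\ admissible x)
                       then Some x else None).
Proof.
rewrite /ghost_op /edge_op pullbackM; apply: pullback_ext => -[v p].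
rewrite /ghost_sel /edge_sel.
case: (pselect ((v, p).1 = s f /\ _)) => [[/= v_sf [p0 adm]] | //] /=.
case: pselect => /= [_ | []]; last by split=> //; case: (admissible_shift adm p0).
by rewrite v_sf pcons_shift.
Qed.

Lemma edge_ghost_sum v (l : seq E1) : l <> [::] -> List.NoDup l ->
  (forall f, List.In f l <-> s f = v) -> \sum_(f <- l) edge_op f * ghost_op f = vertex_op v.
Proof.
move=> l0 nd Hl; under eq_bigr do rewrite edge_ghost_op.
apply: addEnd_ext => m; apply: funext => -[w p].
rewrite addEnd_sumE fct_sumE /= /pullback_fun /vertex_sel /=.
case: pselect => [[wv adm] | nx] /=.
- have adm0 := adm 0%N; rewrite /= in adm0.
  case p0: (p 0%N) adm0 => [g|] sg; last by case: sg; rewrite wv; exists l.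
  rewrite (sum_NoDup_single (g := g) nd); [ | by apply/Hl; rewrite -wv | ].
  + by case: pselect => //= -[]; split; [rewrite sg | split].
  + move=> f _ fg; case: pselect => //= -[_ [f0 _]].
    by case: f0 => gf; case: fg; rewrite gf.
- apply: sum_In_eq0 => f /Hl sf; case: pselect => //= -[wsf [_ adm]].
  by case: nx; split; rewrite // wsf.
Qed.

Lemma model_relations : LPA_relations s r (@lmul walk R) vertex_op edge_op ghost_op.
Proof.
split; first exact: vertex_op_orth.
split; first exact: vertex_op_idem.
split; first by move=> f; split; [exact: vertex_edge_op | exact: edge_vertex_op].
split; first by move=> f; split; [exact: vertex_ghost_op | exact: ghost_vertex_op].
split; first exact: ghost_edge_op_neq.
split; first exact: ghost_edge_op.
split; first by move=> v l; exact: edge_ghost_sum.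
by move=> a; split; [|split] => ?; exact: lmul_pullbackC.
Qed.

Definition prepend (a : seq E1) (q : nat -> option E1) := foldr pcons q a.

Lemma admissible_prepend w a q :
  is_path s r w a -> admissible (endp r w a, q) -> admissible (w, prepend a q).
Proof. by elim: a w => [|f a IH] w //= [<- pa] adm; apply/admissible_cons; exact: IH. Qed.

Lemma path_el_act w a q m : is_path s r w a -> admissible (endp r w a, q) ->
  path_el vertex_op edge_op w a m (w, prepend a q) = m (endp r w a, q).
Proof.
elim: a w m => [|f a IH] w m.
  move=> _ adm; rewrite /Defs.path_el big_nil mulr1 /vertex_op pullbackE /vertex_sel.
  by case: pselect => // -[]; split.
move=> [<- pa] adm; rewrite (path_el_cons model_relations) // addEnd_mulE /edge_op pullbackE.
rewrite /edge_sel; case: pselect => /= [_ | []]; first exact: IH.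
by split=> //; split=> //; apply/admissible_cons; exact: admissible_prepend.
Qed.

Lemma path_star_el_act w a q m : is_path s r w a -> admissible (endp r w a, q) ->
  path_star_el vertex_op ghost_op w a m (endp r w a, q) = m (w, prepend a q).
Proof.
elim: a w m => [|f a IH] w m.
  move=> _ adm; rewrite /Defs.path_star_el big_nil mul1r /vertex_op pullbackE /vertex_sel.
  by case: pselect => // -[]; split.
move=> [<- pa] adm; rewrite (path_star_el_cons model_relations) // addEnd_mulE IH //.
rewrite /ghost_op pullbackE /ghost_sel; case: pselect => // -[]; split=> //.
exact: admissible_prepend.
Qed.

Lemma model_path_proj_neq0 w a : is_path s r w a -> path_proj vertex_op edge_op ghost_op w a <> 0.
Proof.
move=> pa; have [q adm] := admissible_exists (endp r w a).
move=> /(congr1 (fun T : addEnd _ => T (fun=> 1) (w, prepend a q))).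
rewrite /path_proj addEnd_mulE path_el_act // path_star_el_act //.
by move/eqP; rewrite oner_eq0.
Qed.

End BoundaryWalks.

(** * Separated families of paths *)

Section SeparatedFamilies.
Variables (E0 E1 : Type) (s r : E1 -> E0) (R : nzRingType) (B : pzRingType).
Variables (iota : {rmorphism R -> B}) (vv : E0 -> B) (ee es : E1 -> B).
Hypothesis univ : LPA_universal s r iota vv ee es.

Lemma path_proj_neq0 v a : is_path s r v a -> path_proj vv ee es v a <> 0.
Proof.
move=> pa proj0; have [phi [_ phi_v phi_e phi_s _]] := univ.2 _ _ _ _ _ (model_relations s r R).
apply: (model_path_proj_neq0 (R := R) pa); move: (congr1 phi proj0).
rewrite rmorph0 /path_proj /Defs.path_el /Defs.path_star_el !rmorphM !rmorph_prod !phi_v.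
by rewrite (eq_bigr _ (fun f _ => phi_e f)) (eq_bigr _ (fun f _ => phi_s f)).
Qed.

Lemma separated_paths_not_noetherian vf af : separated_paths s r vf af ->
  ~ left_noetherian (in_deg0 s r iota vv ee es) /\
  ~ right_noetherian (in_deg0 s r iota vv ee es).
Proof.
have rel := univ.1; case=> paths sep.
apply: (orthogonal_idempotents_not_noetherian (p := fun k => path_proj vv ee es (vf k) (af k))).
- exact: in_deg0_0.
- exact: in_deg0B.
- exact: in_deg0M.
- by move=> k; apply: in_deg0_path_proj; exact: paths.
- by move=> k; exact: (path_proj_idem rel (paths k)).
- by move=> j k jk; exact: (path_proj_orth rel (paths j) (sep j k jk)).
- by move=> k; exact: (path_proj_neq0 (paths k)).
Qed.

End SeparatedFamilies.

Lemma not_fin_type_inj (T : Type) : ~ Defs.fin_type T -> exists v : nat -> T, injective v.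
Proof.
move=> infT; have fresh l : exists x : T, ~ List.In x l.
  apply: contrapT => all_in; apply: infT; exists l => x.
  by apply: contrapT => nx; apply: all_in; exists x.
have [h hP] := choice fresh.
pose fix hist n := if n is n'.+1 then h (hist n') :: hist n' else [::].
have hist_in k n : (k < n)%N -> List.In (h (hist k)) (hist n).
  by elim: n => [//|n IH]; rewrite ltnS leq_eqVlt => /predU1P [-> | /IH]; [left | right].
exists (fun n => h (hist n)) => i j eq_ij.
case: (ltngtP i j) => [lt_ij | lt_ji | //].
- by case: (hP (hist j)); rewrite -eq_ij; apply: hist_in.
- by case: (hP (hist i)); rewrite eq_ij; apply: hist_in.
Qed.

Section CycleWithExit.
Variables (E0 E1 : Type) (s r : E1 -> E0).
Local Open Scope nat_scope.

Lemma map_iota_path (d : nat -> E1) : (forall j, s (d j.+1) = r (d j)) -> forall j m,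
  is_path s r (s (d j)) (map d (iota j m)) /\
  endp r (s (d j)) (map d (iota j m)) = s (d (j + m)).
Proof.
move=> d_path j m; elim: m j => [|m IH] j; first by rewrite addn0.
have [pm em] := IH j.+1; rewrite /= endp_cons -d_path em addSnnS.
by split.
Qed.

Lemma cycle_exit_separated n c : is_cycle s r n c -> cycle_has_exit s n c ->
  exists vf af, separated_paths s r vf af.
Proof.
move=> [c_path [c_closed _]] [f [i [le_in [sf_ci f_ci]]]].
(* [d] runs around the cycle forever, starting with the edge [c i] that [f] leaves from. *)
pose L := n.+1; pose d j := c ((i + j) %% L).
have d_path j : s (d j.+1) = r (d j).
  rewrite /d addnS -addn1 -modnDml.
  have : ((i + j) %% L < L) by rewrite ltn_mod.
  rewrite ltnS leq_eqVlt => /predU1P [-> | lt_n]; first by rewrite addn1 modnn.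
  by rewrite addn1 modn_small // c_path.
have d_period k : d (k * L) = c i by rewrite /d addnC modnMDl modn_small.
pose af k := map d (iota 0 (k * L)) ++ [:: f].
have af_split j k : (j < k) -> exists t, af k = map d (iota 0 (j * L)) ++ c i :: t.
  move=> lt_jk; exists (map d (iota (j * L).+1 ((k - j) * L).-1) ++ [:: f]).
  have pos : (0 < (k - j) * L) by rewrite muln_gt0 subn_gt0 lt_jk.
  rewrite /af -{1}(subnKC (ltnW lt_jk)) mulnDl -(prednK pos) iotaD map_cat /= add0n -catA.
  by rewrite d_period.
exists (fun=> s (c i)), af; split=> [k | j k jk].
  have [pk ek] := map_iota_path d_path 0 (k * L).
  rewrite -(d_period 0) mul0n in pk ek *; apply/is_path_cat; split=> //.
  by rewrite ek add0n d_period /= sf_ci.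
right; case: (ltngtP j k) => [lt_jk | lt_kj | //].
- have [t ->] := af_split j k lt_jk.
  by exists (map d (iota 0 (j * L))), f, (c i), [::], t.
- have [t ->] := af_split k j lt_kj.
  by exists (map d (iota 0 (k * L))), (c i), f, t, [::]; split=> // /esym.
Qed.

End CycleWithExit.

Theorem lemma4p21 (R : nzRingType) (E0 E1 : Type) (s r : E1 -> E0)
  (B : pzRingType) (iota : {rmorphism R -> B}) (vv : E0 -> B) (ee es : E1 -> B) :
  LPA_universal s r iota vv ee es ->
  left_noetherian (in_deg0 s r iota vv ee es) \/
  right_noetherian (in_deg0 s r iota vv ee es) ->
  finite_graph E0 E1 /\ condNE s r.
Proof.
move=> univ noeth.
have no_separated vf af : ~ separated_paths s r vf af.
  by move=> /(separated_paths_not_noetherian univ) [nl nr]; case: noeth.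
split; first split.
- apply: contrapT => /not_fin_type_inj [v v_inj].
  by apply: (no_separated v (fun=> [::])); split=> // j k jk; left => /v_inj.
- apply: contrapT => /not_fin_type_inj [g g_inj].
  apply: (no_separated (s \o g) (fun k => [:: g k])); split=> [k | j k jk]; first by split.
  by right; exists [::], (g j), (g k), [::], [::]; split=> // /g_inj.
- move=> n c cyc exit; have [vf [af sep]] := cycle_exit_separated cyc exit.
  exact: no_separated sep.
Qed.
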